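(* Identify $\mathcal M_d(\mathbb C)\otimes\mathcal M_m(\mathbb C)$ with $\mathcal M_{dm}(\mathbb C)$ via $A\otimes B\mapsto(b_{ij}A)_{i,j=1}^m$, and define the partial trace $\mathrm{Tr}_m:\mathcal M_{dm}(\mathbb C)\to\mathcal M_d(\mathbb C)$ by $\mathrm{Tr}_m(C)=\sum_{i=1}^m C_{ii}$, where $C=(C_{ij})_{i,j=1}^m$ with $C_{ij}\in\mathcal M_d(\mathbb C)$. (1) If $S\in\mathcal M_{dm}(\mathbb C)$ is Hermitian, there exists $D_S(d,m)\subseteq\mathbb R^d$ such that $\mathrm{Tr}_m(\mathcal U_{dm}(S))=\{A\in\mathcal M_d(\mathbb C)\text{ Hermitian}:\lambda(A)\in D_S(d,m)\}$. (2) If $S\in\mathcal M_{dm}(\mathbb C)$ is positive semidefinite, there exists $D^w_S(d,m)\subseteq(\mathbb R_{\ge0})^d$ such that $\mathrm{Tr}_m(\mathcal C_{dm}(S))=\{A\in\mathcal M_d(\mathbb C)\text{ positive semidefinite}:\lambda(A)\in D^w_S(d,m)\}$.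
   Context: $\mathcal U_{k}(S)=\{U^*SU:U\in\mathcal M_k(\mathbb C)\text{ unitary}\}$, $\mathcal C_k(S)=\{V^*SV:V\in\mathcal M_k(\mathbb C),\|V\|\le1\}$, and $\mathrm{Tr}_m(\mathcal X)=\{\mathrm{Tr}_m(x):x\in\mathcal X\}$. $\lambda(A)$ is the vector of eigenvalues of Hermitian $A$ in non-increasing order with multiplicity. *)

From HB Require Import structures.
From mathcomp Require Import all_boot all_order all_algebra.
From mathcomp Require Import sesquilinear spectral.
From mathcomp.real_closed Require Import complex.

Set Implicit Arguments.
Unset Strict Implicit.
Unset Printing Implicit Defensive.

Import Order.TTheory GRing.Theory Num.Theory.
Local Open Scope ring_scope.
Local Open Scope complex_scope.
Local Open Scope sesquilinear_scope.

(* Complex numbers: R[i] for a real closed field R (R = the reals gives C). *)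

(* Block index: block i : 'I_m, inner index p : 'I_d  |->  i*d + p in 'I_(d*m).
   This realises the identification A (x) B |-> (b_ij A)_{i,j}. *)
Definition bidx (d m : nat) (i : 'I_m) (p : 'I_d) : 'I_(d * m) :=
  cast_ord (mulnC m d) (mxvec_index i p).

Definition ptrace (R : rcfType) (d m : nat) (C : 'M[R[i]]_(d * m)) : 'M[R[i]]_d :=
  \matrix_(p < d, q < d) \sum_(k < m) C (bidx k p) (bidx k q).

Definition is_hermitian (R : rcfType) (n : nat) (A : 'M[R[i]]_n) : Prop :=
  A \is hermsymmx.

Definition psd (R : rcfType) (n : nat) (A : 'M[R[i]]_n) : Prop :=
  A \is hermsymmx /\ forall x : 'cV[R[i]]_n, 0 <= (x ^t* *m A *m x) 0 0.

Definition unitary (R : rcfType) (n : nat) (U : 'M[R[i]]_n) : Prop :=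
  U \is unitarymx.

Definition contraction (R : rcfType) (n : nat) (V : 'M[R[i]]_n) : Prop :=
  forall x : 'cV[R[i]]_n,
    (((V *m x) ^t* *m (V *m x)) 0 0) <= ((x ^t* *m x) 0 0).

(* lam_is A l : l = lambda(A), the vector of eigenvalues of A (roots of the
   characteristic polynomial, with multiplicity) listed in non-increasing order. *)
Definition lam_is (R : rcfType) (n : nat) (A : 'M[R[i]]_n) (l : 'rV[R]_n) : Prop :=
  char_poly A = \prod_(k < n) ('X - ((l 0 k)%:C)%:P) /\
  forall j k : 'I_n, (j <= k)%N -> l 0 k <= l 0 j.

Definition TrU (R : rcfType) (d m : nat) (S : 'M[R[i]]_(d * m)) (A : 'M[R[i]]_d) : Prop :=
  exists U : 'M[R[i]]_(d * m), unitary U /\ A = ptrace (U ^t* *m S *m U).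

Definition TrC (R : rcfType) (d m : nat) (S : 'M[R[i]]_(d * m)) (A : 'M[R[i]]_d) : Prop :=
  exists V : 'M[R[i]]_(d * m), contraction V /\ A = ptrace (V ^t* *m S *m V).

(* The set Tr_m(U_dm(S)) is made of Hermitian matrices and is invariant under
   unitary conjugation A |-> W^* A W: conjugating by W amounts to replacing the
   unitary U by U (W (x) I_m).  Since two Hermitian matrices with the same
   spectrum are unitarily similar, membership in such a set depends only on the
   spectrum, so D_S can be taken to be the set of spectra of its elements.  The
   same argument works for Tr_m(C_dm(S)), whose elements are positive
   semidefinite, because a contraction times a unitary is a contraction. *)

From HB Require Import structures.
From mathcomp Require Import all_boot all_order all_algebra.
From mathcomp Require Import fingroup perm sesquilinear spectral.
From mathcomp.real_closed Require Import complex.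

Set Implicit Arguments.
Unset Strict Implicit.
Unset Printing Implicit Defensive.

Import Order.TTheory GRing.Theory Num.Theory.
Local Open Scope ring_scope.
Local Open Scope complex_scope.
Local Open Scope sesquilinear_scope.

Lemma sum_delta (R : pzSemiRingType) (I : finType) (c : I) (F : I -> R) :
  \sum_a (a == c)%:R * F a = F c.
Proof.
rewrite (bigD1 c) //= eqxx mul1r big1 ?addr0 // => a /negPf ->.
by rewrite mul0r.
Qed.

Lemma bidx_eq d m (k k' : 'I_m) (p p' : 'I_d) :
  (bidx k p == bidx k' p') = (k == k') && (p == p').
Proof.
apply/eqP/andP => [|[/eqP-> /eqP->] //].
by move=> /cast_ord_inj /cast_ord_inj /enum_rank_inj [-> ->].
Qed.

Lemma bidx_surj d m (a : 'I_(d * m)) : exists k p, a = bidx k p.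
Proof.
rewrite -[a](cast_ordKV (mulnC m d)).
by case/mxvec_indexP: (cast_ord _ a) => k p; exists k, p.
Qed.

Lemma diag_mx_perm (R : pzSemiRingType) n (p : 'S_n) (a b : 'rV[R]_n) :
  (forall i, b 0 i = a 0 (p i)) ->
  diag_mx b = perm_mx p *m diag_mx a *m (perm_mx p)^T.
Proof.
move=> ba; rewrite tr_perm_mx -col_permE -row_permE.
by apply/matrixP => i j; rewrite !mxE (inj_eq perm_inj) ba.
Qed.

Lemma char_poly_similar (R : comUnitRingType) n (P A : 'M[R]_n) :
  P \in unitmx -> char_poly (invmx P *m A *m P) = char_poly A.
Proof.
move=> Pu; rewrite /char_poly /char_poly_mx.
have -> : 'X%:M - map_mx polyC (invmx P *m A *m P) =
    map_mx polyC (invmx P) *m ('X%:M - map_mx polyC A) *m map_mx polyC P.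
  rewrite mulmxBr mulmxBl !map_mxM; congr (_ - _).
  by rewrite mul_mx_scalar -scalemxAl -map_mxM mulVmx // map_mx1 scalemx1.
rewrite !det_mulmx mulrC mulrA -det_mulmx -map_mxM mulmxV // map_mx1 det1.
by rewrite mul1r.
Qed.

Lemma char_poly_diag (R : comNzRingType) n (s : 'rV[R]_n) :
  char_poly (diag_mx s) = \prod_(i < n) ('X - (s 0 i)%:P).
Proof.
rewrite char_poly_trig ?diag_mx_is_trig //; apply: eq_bigr => i _.
by rewrite mxE eqxx mulr1n.
Qed.

Section Blocks.
Variable C : numClosedFieldType.

Lemma trmxC_mul m n p (A : 'M[C]_(m, n)) (B : 'M[C]_(n, p)) :
  (A *m B)^t* = B^t* *m A^t*.
Proof. by rewrite trmx_mul map_mxM. Qed.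

Lemma hermP n (A : 'M[C]_n) : reflect (A^t* = A) (A \is hermsymmx).
Proof.
rewrite qualifE /= expr0 scale1r.
by apply: (iffP eqP) => [hA | ->]; rewrite // [in LHS]hA trmxCK.
Qed.

Lemma herm_congr m n (A : 'M[C]_m) (V : 'M[C]_(m, n)) :
  A \is hermsymmx -> V^t* *m A *m V \is hermsymmx.
Proof. by move=> /hermP hA; apply/hermP; rewrite !trmxC_mul trmxCK hA mulmxA. Qed.

(* [blk d k] embeds C^d as the k-th block of C^(dm), i.e. x |-> x (x) e_k. *)
Definition blk d m (k : 'I_m) : 'M[C]_(d * m, d) :=
  \matrix_(a, p) (a == bidx k p)%:R.
Arguments blk d {m} k.

Lemma blk_orth d m (k j : 'I_m) : (blk d k)^t* *m blk d j = (k == j)%:R *: 1%:M.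
Proof.
apply/matrixP => p q; rewrite !mxE.
rewrite (eq_bigr (fun a => (a == bidx k p)%:R * (a == bidx j q)%:R)).
  rewrite sum_delta bidx_eq.
  by case: (k == j); case: (p == q); rewrite ?mulr1 ?mulr0.
by move=> a _; rewrite !mxE rmorph_nat.
Qed.

Lemma sum_blk d m : \sum_(k < m) blk d k *m (blk d k)^t* = 1%:M.
Proof.
apply/matrixP => a b; rewrite summxE.
have [k0 [p0 ->]] := bidx_surj a; have [k1 [p1 ->]] := bidx_surj b.
rewrite (bigD1 k0) //= big1 ?addr0 => [|k nk]; last first.
  rewrite !mxE big1 // => p _.
  by rewrite !mxE bidx_eq eq_sym (negPf nk) mul0r.
rewrite !mxE (bigD1 p0) //= big1 ?addr0 => [|p np]; last first.
  by rewrite !mxE bidx_eq eqxx eq_sym (negPf np) mul0r.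
by rewrite !mxE eqxx mul1r rmorph_nat !bidx_eq [_ == k0]eq_sym [_ == p0]eq_sym.
Qed.

(* The ampliation W (x) I_m. *)
Definition ampl d m (W : 'M[C]_d) : 'M[C]_(d * m) :=
  \sum_(k < m) blk d k *m W *m (blk d k)^t*.

Lemma ampl_blk d m (W : 'M[C]_d) (j : 'I_m) : ampl m W *m blk d j = blk d j *m W.
Proof.
rewrite /ampl mulmx_suml (bigD1 j) //= big1 ?addr0 => [|k nk].
  by rewrite -mulmxA blk_orth eqxx scale1r mulmx1.
by rewrite -mulmxA blk_orth (negPf nk) scale0r mulmx0.
Qed.

Lemma blk_ampl d m (W : 'M[C]_d) (j : 'I_m) :
  (blk d j)^t* *m ampl m W = W *m (blk d j)^t*.
Proof.
rewrite /ampl mulmx_sumr (bigD1 j) //= big1 ?addr0 => [|k nk].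
  by rewrite !mulmxA blk_orth eqxx scale1r mul1mx.
by rewrite !mulmxA blk_orth eq_sym (negPf nk) scale0r !mul0mx.
Qed.

Lemma ampl_adj d m (W : 'M[C]_d) : (ampl m W)^t* = ampl m (W^t*).
Proof.
rewrite /ampl !raddf_sum; apply: eq_bigr => k _.
by rewrite [LHS]trmxC_mul trmxC_mul trmxCK mulmxA.
Qed.

Lemma ampl_unitary d m (W : 'M[C]_d) :
  W \is unitarymx -> ampl m W \is unitarymx.
Proof.
move=> /unitarymxP WW; apply/unitarymxP.
rewrite ampl_adj {1}/ampl mulmx_suml -(sum_blk d m); apply: eq_bigr => k _.
by rewrite -!mulmxA blk_ampl !mulmxA -(mulmxA _ W) WW mulmx1.
Qed.

End Blocks.

Arguments blk {C} d {m} k.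

Section PartialTrace.
Variable R : rcfType.
Local Notation C := R[i].

Lemma ptrace_blk d m (A : 'M[C]_(d * m)) :
  ptrace A = \sum_k (blk d k)^t* *m A *m blk d k.
Proof.
apply/matrixP => p q; rewrite !mxE summxE; apply: eq_bigr => k _.
rewrite mxE (eq_bigr (fun b => (b == bidx k q)%:R * ((blk d k)^t* *m A) p b)).
  rewrite sum_delta mxE -(sum_delta _ (fun a => A a (bidx k q))).
  by apply: eq_bigr => a _; rewrite !mxE rmorph_nat.
by move=> b _; rewrite [blk d k b q]mxE mulrC.
Qed.

Lemma ptrace_ampl d m (W : 'M[C]_d) (A : 'M[C]_(d * m)) :
  ptrace ((ampl m W)^t* *m A *m ampl m W) = W^t* *m ptrace A *m W.
Proof.
rewrite !ptrace_blk mulmx_sumr mulmx_suml; apply: eq_bigr => k _.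
by rewrite ampl_adj -!mulmxA ampl_blk mulmxA blk_ampl -mulmxA.
Qed.

Lemma psd_congr m n (A : 'M[C]_m) (V : 'M[C]_(m, n)) :
  psd A -> psd (V^t* *m A *m V).
Proof.
move=> [hA pA]; split=> [|x]; first exact: herm_congr.
by have := pA (V *m x); rewrite trmxC_mul !mulmxA.
Qed.

Lemma herm_ptrace d m (A : 'M[C]_(d * m)) :
  A \is hermsymmx -> ptrace A \is hermsymmx.
Proof.
move=> hA; apply/hermP; rewrite ptrace_blk !raddf_sum; apply: eq_bigr => k _.
exact/hermP/herm_congr.
Qed.

Lemma psd_ptrace d m (A : 'M[C]_(d * m)) : psd A -> psd (ptrace A).
Proof.
move=> [hA pA]; split=> [|x]; first exact: herm_ptrace.
rewrite ptrace_blk mulmx_sumr mulmx_suml summxE; apply: sumr_ge0 => k _.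
by have := pA (blk d k *m x); rewrite trmxC_mul !mulmxA.
Qed.

End PartialTrace.

Section HermitianSpectrum.
Variable R : rcfType.
Local Notation C := R[i].
Local Notation realC := (map_mx (real_complex R)).

Lemma char_poly_unitary_diag n (P : 'M[C]_n) (s : 'rV[R]_n) :
  P \is unitarymx ->
  char_poly (P^t* *m diag_mx (realC s) *m P) = \prod_(i < n) ('X - ((s 0 i)%:C)%:P).
Proof.
move=> Pu; rewrite -invmx_unitary // char_poly_similar ?unitarymx_unit //.
by rewrite char_poly_diag; apply: eq_bigr => i _; rewrite mxE.
Qed.

Lemma herm_unitary_diag n (A : 'M[C]_n) : A \is hermsymmx ->
  exists P : 'M[C]_n, exists s : 'rV[R]_n,
    P \is unitarymx /\ A = P^t* *m diag_mx (realC s) *m P.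
Proof.
move=> hA; exists (spectralmx A), (map_mx (@complex.Re R) (spectral_diag A)).
split; first exact: spectral_unitarymx.
rewrite -invmx_unitary ?spectral_unitarymx //.
have -> : realC (map_mx (@complex.Re R) (spectral_diag A)) = spectral_diag A.
  apply/matrixP => i j; rewrite !mxE.
  have /mxOverP/(_ i j) := hermitian_spectral_diag_real hA.
  by case: (spectral_diag A i j) => a b; rewrite complex_real => /eqP ->.
exact/orthomx_spectralP/hermitian_normalmx.
Qed.

Lemma herm_lam n (A : 'M[C]_n) : A \is hermsymmx -> exists l, lam_is A l.
Proof.
move=> /herm_unitary_diag [P [s [Pu ->]]].
pose t := sort (fun x y : R => y <= x) [seq s 0 i | i <- enum 'I_n].
have size_t : size t = n by rewrite size_sort size_map size_enum_ord.
exists (\row_k t`_k); split.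
  rewrite char_poly_unitary_diag //.
  under [RHS]eq_bigr do rewrite mxE.
  have -> : \prod_(k < n) ('X - ((t`_k)%:C)%:P) = \prod_(x <- t) ('X - (x%:C)%:P).
    by rewrite (big_nth 0) size_t big_mkord.
  by rewrite (perm_big _ (permEl (perm_sort _ _))) big_map big_enum.
move=> j k le_jk; rewrite !mxE.
have total_ge : total (fun x y : R => y <= x) by move=> x y; rewrite le_total.
have trans_ge : transitive (fun x y : R => y <= x).
  by move=> x y z /= hyx hzy; apply: le_trans hyx.
by apply: (sorted_leq_nth trans_ge _ 0 (sort_sorted total_ge _)); rewrite ?inE ?size_t.
Qed.

Lemma herm_lam_diag n (A : 'M[C]_n) (l : 'rV[R]_n) :
  A \is hermsymmx -> lam_is A l ->
  exists W : 'M[C]_n, W \is unitarymx /\ A = W^t* *m diag_mx (realC l) *m W.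
Proof.
move=> /herm_unitary_diag [P [s [Pu eA]]] [cpA _].
have e : \prod_(x <- [tuple realC s 0 i | i < n]) ('X - x%:P) =
         \prod_(x <- [tuple realC l 0 i | i < n]) ('X - x%:P).
  rewrite !big_tuple.
  under eq_bigr do rewrite tnth_mktuple mxE.
  under [RHS]eq_bigr do rewrite tnth_mktuple mxE.
  by rewrite -(char_poly_unitary_diag s Pu) -eA cpA.
have [p /val_inj hp] := tuple_permP (prod_XsubC_eq e).
have sp i : realC s 0 i = realC l 0 (p i).
  by have /(congr1 (fun t => tnth t i)) := hp; rewrite !tnth_mktuple.
exists ((perm_mx p)^T *m P); split.
  apply: mul_unitarymx Pu; apply/unitarymxP.
  by rewrite trmxK map_perm_mx tr_perm_mx -perm_mxM mulVg perm_mx1.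
by rewrite eA (diag_mx_perm sp) trmxC_mul trmxK map_perm_mx !mulmxA.
Qed.

Lemma herm_unitary_similar n (A B : 'M[C]_n) (l : 'rV[R]_n) :
  A \is hermsymmx -> B \is hermsymmx -> lam_is A l -> lam_is B l ->
  exists W : 'M[C]_n, W \is unitarymx /\ A = W^t* *m B *m W.
Proof.
move=> hA hB lA lB.
have [Wa [Wau ->]] := herm_lam_diag hA lA; have [Wb [Wbu ->]] := herm_lam_diag hB lB.
exists (Wb^t* *m Wa); split; first by rewrite mul_unitarymx ?trmxC_unitary.
by rewrite trmxC_mul trmxCK !mulmxA !mulmxtVK.
Qed.

Lemma psd_lam_ge0 n (A : 'M[C]_n) (l : 'rV[R]_n) :
  psd A -> lam_is A l -> forall k, 0 <= l 0 k.
Proof.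
move=> [hA pA] lA k; have [W [Wu eA]] := herm_lam_diag hA lA.
have := pA (W^t* *m delta_mx k 0).
rewrite eA trmxC_mul trmxCK !mulmxA !mulmxtVK // trmx_delta map_delta_mx -rowE.
by rewrite row_diag_mx -scalemxAl mul_delta_mx !mxE eqxx mulr1 ler0c.
Qed.

Lemma unitary_invariant_spectral n (X : 'M[C]_n -> Prop) :
  (forall B, X B -> B \is hermsymmx) ->
  (forall B W, X B -> W \is unitarymx -> X (W^t* *m B *m W)) ->
  forall A, X A <->
    A \is hermsymmx /\ exists l, lam_is A l /\ exists B, X B /\ lam_is B l.
Proof.
move=> Xherm Xinv A; split=> [XA | [hA [l [lA [B [XB lB]]]]]].
  have hA := Xherm A XA; have [l lA] := herm_lam hA.
  by split=> //; exists l; split=> //; exists A.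
have [W [Wu ->]] := herm_unitary_similar hA (Xherm B XB) lA lB.
exact: Xinv.
Qed.

End HermitianSpectrum.

Lemma TrU_herm (R : rcfType) d m (S : 'M[R[i]]_(d * m)) :
  S \is hermsymmx -> forall A, TrU S A -> A \is hermsymmx.
Proof. by move=> hS A [U [_ ->]]; apply/herm_ptrace/herm_congr. Qed.

Lemma TrC_psd (R : rcfType) d m (S : 'M[R[i]]_(d * m)) :
  psd S -> forall A, TrC S A -> psd A.
Proof. by move=> pS A [V [_ ->]]; apply/psd_ptrace/psd_congr. Qed.

Lemma TrU_unitary_invariant (R : rcfType) d m (S : 'M[R[i]]_(d * m)) A W :
  TrU S A -> W \is unitarymx -> TrU S (W^t* *m A *m W).
Proof.
move=> [U [Uu ->]] Wu; exists (U *m ampl m W).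
by rewrite /unitary mul_unitarymx ?ampl_unitary // -ptrace_ampl trmxC_mul !mulmxA.
Qed.

Lemma contraction_mul_unitary (R : rcfType) n (V U : 'M[R[i]]_n) :
  contraction V -> U \is unitarymx -> contraction (V *m U).
Proof.
move=> cV Uu x; have := cV (U *m x).
have -> : (U *m x)^t* *m (U *m x) = x^t* *m x.
  by rewrite trmxC_mul -mulmxA (mulmxA (U^t*)) -[U^t*]mul1mx mulmxKtV // !mul1mx.
by rewrite !mulmxA.
Qed.

Lemma TrC_unitary_invariant (R : rcfType) d m (S : 'M[R[i]]_(d * m)) A W :
  TrC S A -> W \is unitarymx -> TrC S (W^t* *m A *m W).
Proof.
move=> [V [cV ->]] Wu; exists (V *m ampl m W); split.
  exact/contraction_mul_unitary/ampl_unitary.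
by rewrite -ptrace_ampl trmxC_mul !mulmxA.
Qed.

Theorem theorem3p6 (R : rcfType) (d m : nat) :
  (forall S : 'M[R[i]]_(d * m), is_hermitian S ->
     exists D : 'rV[R]_d -> Prop,
       forall A : 'M[R[i]]_d,
         TrU S A <-> (is_hermitian A /\ exists l, lam_is A l /\ D l))
  /\
  (forall S : 'M[R[i]]_(d * m), psd S ->
     exists D : 'rV[R]_d -> Prop,
       (forall l, D l -> forall k : 'I_d, 0 <= l 0 k) /\
       forall A : 'M[R[i]]_d,
         TrC S A <-> (psd A /\ exists l, lam_is A l /\ D l)).
Proof.
split=> S hS.
  exists (fun l => exists B, TrU S B /\ lam_is B l).
  exact: unitary_invariant_spectral (TrU_herm hS) (@TrU_unitary_invariant _ _ _ S).
exists (fun l => exists B, TrC S B /\ lam_is B l).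
have TrC_herm B : TrC S B -> B \is hermsymmx by move/(TrC_psd hS) => [].
have spec := unitary_invariant_spectral TrC_herm (@TrC_unitary_invariant _ _ _ S).
split=> [l [B [/(TrC_psd hS) pB lB]] | A]; first exact: psd_lam_ge0 lB.
split=> [TrCA | [[hA _] spA]]; last exact/spec.
by split; [exact: TrC_psd TrCA | case/spec: TrCA].
Qed.
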